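(* Let $d\ge 1$, let $\epsilon>0$ and let $\eta$ be a positive integer. Let $S_{\text{prototype}}$ and $S_{\text{inc}}$ be disjoint finite subsets of $\mathbb{R}^d$, and put $Q' = S_{\text{prototype}}\cup S_{\text{inc}}$. Let $c_1$ be a cluster of $S_{\text{prototype}}$ (in the sense defined in the context, computed within $S_{\text{prototype}}$), and let $u\in c_1$. Let $v\in S_{\text{inc}}$ be such that $u$ and $v$ are both core points of $Q'$ and $\mathrm{dist}(u,v)\le\epsilon$ (so $u$ and $v$ are directly density-reachable from each other in $Q'$). Then: (i) for every $w\in c_1$ there is a path in $G(Q')$ from $w$ to $v$ consisting only of active edges of $G(Q')$; and (ii) for every $z\in S_{\text{inc}}$ that is density-reachable from $v$ in $Q'$, or from which $v$ is density-reachable in $Q'$, the point $z$ is density-connected to $u$ in $Q'$ and $z$ belongs to the same cluster of $Q'$ as $u$ (and hence as every point of $c_1$).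
   Context: Distances are Euclidean. For a finite set $Q\subset\mathbb{R}^d$ and $x\in Q$, the $\epsilon$-neighborhood of $x$ in $Q$ is $N_\epsilon^Q(x)=\{y\in Q:\mathrm{dist}(x,y)\le\epsilon\}$. The point $x$ is a core point of $Q$ if $|N_\epsilon^Q(x)|\ge\eta$. A point $p$ is directly density-reachable from $q$ in $Q$ if $p\in N_\epsilon^Q(q)$ and $q$ is a core point of $Q$. A point $p$ is density-reachable from $q$ in $Q$ if there is a sequence $p_1=p,\dots,p_m=q$ in $Q$ such that consecutive points are linked by direct density-reachability (each link going out from a core point). The graph $G(Q)$ has vertex set $Q$ and an edge $\{x,y\}$ for distinct $x,y\in Q$ with $\mathrm{dist}(x,y)\le\epsilon$; an edge is called active if at least one of its endpoints is a core point of $Q$ (edges with both endpoints core are ''volatile-yes'', with exactly one core endpoint ''volatile-weak''). A cluster of $Q$ is a maximal set of vertices of $G(Q)$ that are pairwise connected by paths of active edges (i.e. a connected component, containing a core point, of the subgraph of active edges); two points are density-connected when they lie in such a common connected set. The same threshold $\eta$ and radius $\epsilon$ are used for $S_{\text{prototype}}$ and for $Q'$. *)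

From HB Require Import structures.
From mathcomp Require Import all_boot all_order all_algebra.
From mathcomp Require Import finmap.
From mathcomp Require Import reals.
Set Implicit Arguments. Unset Strict Implicit. Unset Printing Implicit Defensive.
Import Order.TTheory GRing.Theory Num.Theory.
Local Open Scope ring_scope.
Local Open Scope fset_scope.

Section DBSCAN.
Variables (R : realType) (d : nat).
Notation pt := 'rV[R]_d.

Definition dist (x y : pt) : R := Num.sqrt (\sum_(i < d) (x 0 i - y 0 i) ^+ 2).

Variables (eps : R) (eta : nat).

Definition nbhd (Q : {fset pt}) (x : pt) : {fset pt} := [fset y in Q | dist x y <= eps].

Definition core (Q : {fset pt}) (x : pt) : bool := (x \in Q) && (eta <= #|` nbhd Q x|)%N.

Definition ddr (Q : {fset pt}) (p q : pt) : bool := [&& p \in Q, p \in nbhd Q q & core Q q].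

Definition dr (Q : {fset pt}) (p q : pt) : Prop :=
  p \in Q /\ exists s : seq pt, path (ddr Q) p s /\ last p s = q.

Definition edge (Q : {fset pt}) (x y : pt) : bool :=
  [&& x \in Q, y \in Q, x != y & dist x y <= eps].

Definition active_edge (Q : {fset pt}) (x y : pt) : bool :=
  edge Q x y && (core Q x || core Q y).

Definition active_path (Q : {fset pt}) (x y : pt) : Prop :=
  exists s : seq pt, path (active_edge Q) x s /\ last x s = y.

(* C is a cluster of Q: a connected component of the active-edge subgraph of
   G(Q) that contains a core point *)
Definition is_cluster (Q : {fset pt}) (C : {fset pt}) : Prop :=
  [/\ C `<=` Q,
      exists2 x, x \in C & core Q x &
      forall x, x \in C -> forall y, y \in Q -> (y \in C <-> active_path Q x y)].

Definition density_connected (Q : {fset pt}) (x y : pt) : Prop :=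
  exists C, [/\ is_cluster Q C, x \in C & y \in C].

End DBSCAN.

From HB Require Import structures.
From mathcomp Require Import all_boot all_order all_algebra.
From mathcomp Require Import finmap.
From mathcomp Require Import reals.
From Stdlib Require Import ClassicalDescription.
Set Implicit Arguments. Unset Strict Implicit. Unset Printing Implicit Defensive.
Import Order.TTheory GRing.Theory Num.Theory.
Local Open Scope ring_scope.
Local Open Scope fset_scope.

(* Since u is in Sproto, v is in Sinc and the two sets are disjoint, u <> v, so
   u -- v is an active edge of G(Q').  Enlarging the point set only enlarges
   neighbourhoods, so core points of Sproto stay core in Q' and active paths of
   G(Sproto) stay active in G(Q'): every point of c1 reaches u, hence v.  Each
   link of a density-reachability chain leaves a core point, so the chain is an
   active path, and clusters are exactly the active components. *)

Section DBSCANGraph.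
Variables (R : realType) (d : nat) (eps : R) (eta : nat).
Notation pt := 'rV[R]_d.

Lemma dist_sym (x y : pt) : dist x y = dist y x.
Proof. by rewrite /dist; congr Num.sqrt; apply: eq_bigr => i _; rewrite -sqrrN opprB. Qed.

Lemma edge_sym (Q : {fset pt}) x y : edge eps Q x y = edge eps Q y x.
Proof. by rewrite /edge dist_sym eq_sym; case: (x \in Q); case: (y \in Q). Qed.

Lemma active_edge_sym (Q : {fset pt}) x y :
  active_edge eps eta Q x y = active_edge eps eta Q y x.
Proof. by rewrite /active_edge edge_sym orbC. Qed.

Lemma active_path_refl (Q : {fset pt}) x : active_path eps eta Q x x.
Proof. by exists [::]. Qed.

Lemma active_path_trans (Q : {fset pt}) x y z :
  active_path eps eta Q x y -> active_path eps eta Q y z ->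
  active_path eps eta Q x z.
Proof.
move=> [s1 [p1 <-]] [s2 [p2 <-]]; exists (s1 ++ s2).
by rewrite cat_path last_cat p1 p2.
Qed.

Lemma active_edge_path (Q : {fset pt}) x y :
  active_edge eps eta Q x y -> active_path eps eta Q x y.
Proof. by move=> exy; exists [:: y]; rewrite /= exy. Qed.

Lemma active_path_sym (Q : {fset pt}) x y :
  active_path eps eta Q x y -> active_path eps eta Q y x.
Proof.
move=> [s [+ <-]]; elim: s x => [|z s IHs] x /=; first by move=> _; exact: active_path_refl.
case/andP=> exz /IHs zsz; apply: active_path_trans zsz _.
by apply: active_edge_path; rewrite active_edge_sym.
Qed.

Lemma ddr_active_path (Q : {fset pt}) p q :
  ddr eps eta Q p q -> active_path eps eta Q p q.
Proof.
case/and3P=> pQ; rewrite inE /= => /andP[_ dqp] cq.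
have [->|npq] := eqVneq p q; first exact: active_path_refl.
have qQ : q \in Q by case/andP: cq.
by apply: active_edge_path; rewrite /active_edge /edge pQ qQ npq dist_sym dqp cq orbT.
Qed.

Lemma dr_active_path (Q : {fset pt}) p q :
  dr eps eta Q p q -> active_path eps eta Q p q.
Proof.
move=> [_ [s [+ <-]]]; elim: s p => [|r s IHs] p /=; first by move=> _; exact: active_path_refl.
by case/andP=> /ddr_active_path + /IHs; apply: active_path_trans.
Qed.

Lemma core_fsubset (Q Q' : {fset pt}) x :
  Q `<=` Q' -> core eps eta Q x -> core eps eta Q' x.
Proof.
move=> /fsubsetP sQQ' /andP[xQ nbx]; rewrite /core sQQ' //=.
apply: leq_trans nbx (fsubset_leq_card _); apply/fsubsetP => y.
by rewrite !inE /= => /andP[/sQQ' -> ->].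
Qed.

Lemma active_edge_fsubset (Q Q' : {fset pt}) x y :
  Q `<=` Q' -> active_edge eps eta Q x y -> active_edge eps eta Q' x y.
Proof.
move=> sQQ' /andP[/and4P[xQ yQ nxy dxy] cxy].
move/fsubsetP: (sQQ') => sub; rewrite /active_edge /edge !sub //= nxy dxy /=.
by case/orP: cxy => /(core_fsubset sQQ') ->; rewrite ?orbT.
Qed.

Lemma active_path_fsubset (Q Q' : {fset pt}) x y :
  Q `<=` Q' -> active_path eps eta Q x y -> active_path eps eta Q' x y.
Proof.
move=> sQQ' [s [pxs lxs]]; exists s; split=> //.
by apply: sub_path pxs => a b; apply: active_edge_fsubset.
Qed.

Lemma cluster_active_path (Q C : {fset pt}) x y :
  is_cluster eps eta Q C -> x \in C -> y \in C -> active_path eps eta Q x y.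
Proof.
move=> [/fsubsetP CQ _ compC] xC yC.
exact/(compC x xC y (CQ y yC)).
Qed.

Lemma cluster_closed (Q C : {fset pt}) x y :
  is_cluster eps eta Q C -> x \in C -> y \in Q ->
  active_path eps eta Q x y -> y \in C.
Proof. by move=> [_ _ compC] xC yQ /(compC x xC y yQ). Qed.

Lemma exists_cluster (Q : {fset pt}) u :
  core eps eta Q u -> exists2 C, is_cluster eps eta Q C & u \in C.
Proof.
move=> cu; have uQ : u \in Q by case/andP: cu.
pose C := [fset y in Q |
  is_left (excluded_middle_informative (active_path eps eta Q u y))].
have memC y : y \in C <-> y \in Q /\ active_path eps eta Q u y.
  rewrite !inE /=; case: excluded_middle_informative => /= uy.
    by rewrite andbT; split=> [->|[]].
  by rewrite andbF; split=> // -[].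
have uC : u \in C by apply/memC; split; last exact: active_path_refl.
exists C => //; split; last 1 first.
- move=> x /memC [_ ux] y yQ; split=> [/memC [_ uy]|xy].
    exact: active_path_trans (active_path_sym ux) uy.
  by apply/memC; split; last exact: active_path_trans ux xy.
- by apply/fsubsetP => y /memC [].
- by exists u.
Qed.

End DBSCANGraph.

Theorem lemma4p2 (R : realType) (d : nat) (eps : R) (eta : nat)
  (Sproto Sinc : {fset 'rV[R]_d}) (c1 : {fset 'rV[R]_d}) (u v : 'rV[R]_d) :
  (0 < d)%N -> 0 < eps -> (0 < eta)%N ->
  [disjoint Sproto & Sinc] ->
  is_cluster eps eta Sproto c1 -> u \in c1 ->
  v \in Sinc ->
  core eps eta (Sproto `|` Sinc) u -> core eps eta (Sproto `|` Sinc) v ->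
  dist u v <= eps ->
  (forall w, w \in c1 -> active_path eps eta (Sproto `|` Sinc) w v) /\
  (forall z, z \in Sinc ->
     (dr eps eta (Sproto `|` Sinc) z v \/ dr eps eta (Sproto `|` Sinc) v z) ->
     density_connected eps eta (Sproto `|` Sinc) z u /\
     (forall C, is_cluster eps eta (Sproto `|` Sinc) C -> u \in C ->
        z \in C /\ {subset c1 <= C})).
Proof.
move=> _ _ _ disjSS' c1clus uc1 vS' cu _ duv.
set Q := Sproto `|` Sinc.
have sSQ : Sproto `<=` Q := fsubsetUl _ _.
have c1S : {subset c1 <= Sproto} by case: c1clus => /fsubsetP.
have uS := c1S u uc1.
have neq_uv : u != v by apply: contraTneq vS' => <-; rewrite (fdisjointP disjSS').
have uv : active_path eps eta Q u v.
  apply: active_edge_path.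
  by rewrite /active_edge /edge cu (fsubsetP sSQ) // inE vS' orbT neq_uv duv.
have c1v w : w \in c1 -> active_path eps eta Q w v.
  move=> wc1; apply: active_path_trans uv.
  exact/(active_path_fsubset sSQ)/(cluster_active_path c1clus wc1 uc1).
split=> // z zS' vz_dr.
have zQ : z \in Q by rewrite inE zS' orbT.
have uz : active_path eps eta Q u z.
  apply: active_path_trans uv _.
  by case: vz_dr => /dr_active_path //; apply: active_path_sym.
have inC C : is_cluster eps eta Q C -> u \in C -> z \in C /\ {subset c1 <= C}.
  move=> Cclus uC; split; first exact: cluster_closed Cclus uC zQ uz.
  move=> w wc1; apply: cluster_closed Cclus uC _ _.
    by rewrite (fsubsetP sSQ) ?c1S.
  exact: active_path_trans uv (active_path_sym (c1v w wc1)).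
split=> //; have [C Cclus uC] := exists_cluster cu.
by exists C; split=> //; case: (inC C Cclus uC).
Qed.
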